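(* Let $p/q$ be an even rational parameter, $\omega=p+q$, $P=2p/\omega$. Let $\Lambda_P\subset\mathbb R^3$ be the lattice generated by $(2,P,P)$, $(0,2,0)$, $(0,0,2)$, let $\mathcal C=\{(m+\tfrac12,n+\tfrac12): m,n\in\mathbb Z\}$, let $L\subset\mathbb Z^2$ be the lattice generated by $(\omega^2,0)$ and $(0,\omega)$, and let $\mathcal X=\frac{\mathbb Z_1}{\omega}\times\frac{\mathbb Z_0}{\omega}\times\frac{\mathbb Z_0}{\omega}\subset\mathbb R^3$, where $\mathbb Z_0$ and $\mathbb Z_1$ are the even and the odd integers. Define $\Xi:\mathbb R^2\to\mathbb R^3/\Lambda_P$ by $\Xi(x,y)=(2Px+2y,\,2Px,\,2Px+2Py)\bmod\Lambda_P$. Then $\Xi$ induces a well-defined map $\mathcal C/L\to\mathcal X/\Lambda_P$, and this map is a bijection.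
   Context: An even rational parameter is a rational $p/q\in(0,1)$, with $p,q$ positive coprime integers, such that $pq$ is even. Note $\Lambda_P$ preserves $\mathcal X$. *)

From HB Require Import structures.
From mathcomp Require Import all_boot all_order all_algebra.
Set Implicit Arguments. Unset Strict Implicit. Unset Printing Implicit Defensive.
Import Order.TTheory GRing.Theory Num.Theory.
Local Open Scope ring_scope.

Definition sub3 (R : realFieldType) (u v : R * R * R) : R * R * R :=
  (u.1.1 - v.1.1, u.1.2 - v.1.2, u.2 - v.2).
Definition sub2 (R : realFieldType) (u v : R * R) : R * R :=
  (u.1 - v.1, u.2 - v.2).

Definition even_rational_param (p q : nat) : Prop :=
  [/\ (0 < p)%N, (p < q)%N, coprime p q & ~~ odd (p * q)].

Definition omega (p q : nat) : nat := (p + q)%N.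
Definition Ppar (R : realFieldType) (p q : nat) : R := (2 * p)%:R / (omega p q)%:R.

Definition inLambda (R : realFieldType) (P : R) (v : R * R * R) : Prop :=
  exists a b c : int,
    v = (a%:~R * 2, a%:~R * P + b%:~R * 2, a%:~R * P + c%:~R * 2).

Definition inC (R : realFieldType) (c : R * R) : Prop :=
  exists m n : int, c = (m%:~R + 2^-1, n%:~R + 2^-1).

Definition inL (R : realFieldType) (w : nat) (u : R * R) : Prop :=
  exists a b : int, u = (a%:~R * (w ^ 2)%:R, b%:~R * w%:R).

Definition inX (R : realFieldType) (w : nat) (v : R * R * R) : Prop :=
  exists a b c : int,
    v = ((2 * a + 1)%:~R / w%:R, (2 * b)%:~R / w%:R, (2 * c)%:~R / w%:R).

(* Xi(x,y) = (2Px+2y, 2Px, 2Px+2Py) (representative in R^3, taken mod Lambda_P). *)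
Definition Xi (R : realFieldType) (P : R) (c : R * R) : R * R * R :=
  (2 * P * c.1 + 2 * c.2, 2 * P * c.1, 2 * P * c.1 + 2 * P * c.2).

From mathcomp Require Import all_boot all_order all_algebra ring lra zify.
Import Order.TTheory GRing.Theory Num.Theory.
Local Open Scope ring_scope.
Set Implicit Arguments.
Unset Strict Implicit.
Unset Printing Implicit Defensive.

(* With w = p + q, which is odd because pq is even and p, q are coprime, everything
   becomes integral after scaling by w/2: Lambda_P becomes the lattice generated by
   (w, p, p), (0, w, 0), (0, 0, w), and Xi on integer points becomes
   (m, n) |-> (2pm + wn, 2pm, 2pm + 2pn).  The half-integer offset of C only adds the
   point Xi(1/2, 1/2), which lies in X.  So the theorem says that this integer map
   has kernel exactly L modulo the scaled lattice and is onto modulo it; both follow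
   from 2p being invertible modulo w. *)

Lemma sub2E (R : realFieldType) (u v : R * R) : sub2 u v = u - v.
Proof. by []. Qed.

Lemma sub3E (R : realFieldType) (u v : R * R * R) : sub3 u v = u - v.
Proof. by []. Qed.

Lemma odd_omega p q : even_rational_param p q -> odd (omega p q).
Proof.
case=> _ _ cop; rewrite /omega oddD oddM.
case op: (odd p); case oq: (odd q) => //= _.
suff : (2 %| gcdn p q)%N by rewrite (eqP cop).
by rewrite dvdn_gcd !dvdn2 op oq.
Qed.

Lemma coprimez_2p_omega p q :
  even_rational_param p q -> coprimez (2 * p%:Z) (omega p q)%:Z.
Proof.
move=> pq; have w_odd := odd_omega pq; case: pq => _ _ cop _.
by rewrite coprimezE -PoszM !absz_nat coprimeMl coprime2n w_odd /omega /coprime gcdnDl.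
Qed.

Lemma coprimez_solve (a w : int) z : coprimez a w -> exists x y, z = a * x + w * y.
Proof.
case/coprimezP=> [[u v] /= uv]; exists (u * z), (v * z).
by rewrite -[LHS]mul1r -uv; ring.
Qed.

Section IntegerLattice.
Variables p w : int.

Definition inLambdaZ (z : int * int * int) : Prop :=
  exists A B C : int, z = (w * A, p * A + w * B, p * A + w * C).

Definition XiZ (m n : int) : int * int * int :=
  (2 * p * m + w * n, 2 * p * m, 2 * p * m + 2 * p * n).

Hypothesis cop : coprimez (2 * p) w.

Let w_neq0 : w != 0.
Proof. by apply: contraTneq cop => ->; rewrite coprimezMl. Qed.

Let cop_wp : coprimez w p.
Proof. by move: cop; rewrite coprimez_sym coprimezMr => /andP[]. Qed.

Let cop_w2 : coprimez w 2.
Proof. by move: cop; rewrite coprimez_sym coprimezMr => /andP[]. Qed.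

Let cop_w2p : coprimez w (2 * p).
Proof. by rewrite coprimez_sym. Qed.

Lemma XiZ_kernelP m n : inLambdaZ (XiZ m n) <-> (w ^+ 2 %| m)%Z /\ (w %| n)%Z.
Proof.
split; last first.
  case=> /dvdzP[a ->] /dvdzP[b ->].
  exists (w * (2 * p * a + b)), (2 * p * a * w - p * (2 * p * a + b)),
    (2 * p * a * w + 2 * p * b - p * (2 * p * a + b)).
  by rewrite /XiZ; congr (_, _, _); ring.
case=> A [B [C [e1 e2 e3]]].
have /dvdzP[k em] : (w %| m)%Z.
  by rewrite -(Gauss_dvdzl _ cop_w2p); apply/dvdzP; exists (A - n); lra.
subst m.
have eA : A = 2 * p * k + n by apply: (mulfI w_neq0); lra.
subst A.
have w_dvdD : (w %| 2 * p * k + n)%Z.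
  by rewrite -(Gauss_dvdzl _ cop_wp); apply/dvdzP; exists (2 * p * k - B); lra.
have w_dvdB : (w %| n - 2 * p * k)%Z.
  by rewrite -(Gauss_dvdzl _ cop_wp); apply/dvdzP; exists (C - 2 * p * k); lra.
have w_dvd_k : (w %| k)%Z.
  have cop_w4p : coprimez w (2 * (2 * p)) by rewrite coprimezMr cop_w2.
  rewrite -(Gauss_dvdzl _ cop_w4p).
  have -> : k * (2 * (2 * p)) = (2 * p * k + n) - (n - 2 * p * k) by ring.
  exact: rpredB.
have w_dvd_n : (w %| n)%Z.
  rewrite -(Gauss_dvdzl _ cop_w2).
  have -> : n * 2 = (2 * p * k + n) + (n - 2 * p * k) by ring.
  exact: rpredD.
by split; rewrite // expr2 dvdz_mul.
Qed.

Lemma XiZ_surjective z : exists m n, inLambdaZ (XiZ m n - z).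
Proof.
(* The first coordinate fixes m = m0 modulo w; replacing m0 by m0 - w t shifts the two
   congruences on n imposed by the other coordinates in opposite directions by
   (2p)^2 t, and t is chosen to make them agree. *)
case: z => [[z1 z2] z3].
have cop_pw : coprimez p w by rewrite coprimez_sym.
have cop_sq : coprimez ((2 * p) ^+ 2) w by rewrite coprimezXl.
have [m0 [s0 e1]] := coprimez_solve z1 cop.
have [A0 [B0 e2]] := coprimez_solve (z2 - 2 * p * m0) cop_pw.
have [t [D e3]] := coprimez_solve (z3 - z2 - 2 * p * s0 + 2 * p * A0) cop_sq.
exists (m0 - w * t), (s0 + 2 * p * t - A0), (- A0), (- (B0 + 2 * p * t)),
  (- (B0 + 2 * p * t + D)).
by rewrite /XiZ; congr (_, _, _) => /=; lra.
Qed.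

End IntegerLattice.

Lemma XiD (R : realFieldType) (P : R) (c c' : R * R) :
  Xi P (c + c') = Xi P c + Xi P c'.
Proof. by case: c c' => [x y] [x' y']; rewrite /Xi; congr (_, _, _) => /=; ring. Qed.

Lemma XiB (R : realFieldType) (P : R) (c c' : R * R) :
  Xi P (c - c') = Xi P c - Xi P c'.
Proof. by case: c c' => [x y] [x' y']; rewrite /Xi; congr (_, _, _) => /=; ring. Qed.

Lemma inL_intP (R : realFieldType) (w : nat) (m n : int) :
  inL w ((m%:~R, n%:~R) : R * R) <-> (w%:Z ^+ 2 %| m)%Z /\ (w%:Z %| n)%Z.
Proof.
have castE a b : ((a * w%:Z ^+ 2)%:~R, (b * w%:Z)%:~R) =
    (a%:~R * (w ^ 2)%:R, b%:~R * w%:R) :> R * R.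
  by rewrite !intrM natrX expr2.
split=> [[a [b]] | [/dvdzP[a ->] /dvdzP[b ->]]]; last by exists a, b.
rewrite -castE => -[/intr_inj -> /intr_inj ->].
by split; apply/dvdzP; [exists a | exists b].
Qed.

Lemma inLambda_subrr (R : realFieldType) (P : R) v : inLambda P (sub3 v v).
Proof. by rewrite sub3E subrr; exists 0, 0, 0; congr (_, _, _); ring. Qed.

Section Embedding.
Variables (R : realFieldType) (p w : nat).
Hypothesis w_gt0 : (0 < w)%N.
Local Notation P := ((2 * p)%:R / w%:R : R).

Definition embed (z : int * int * int) : R * R * R :=
  (2 * z.1.1%:~R / w%:R, 2 * z.1.2%:~R / w%:R, 2 * z.2%:~R / w%:R).

Let wR_neq0 : w%:R != 0 :> R.
Proof. by rewrite pnatr_eq0 -lt0n. Qed.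

Lemma embedB z z' : embed (z - z') = embed z - embed z'.
Proof.
case: z z' => [[? ?] ?] [[? ?] ?].
by rewrite /embed; congr (_, _, _) => /=; rewrite intrB; ring.
Qed.

Lemma embed_inj : injective embed.
Proof.
have two_neq0 : 2 != 0 :> R by rewrite pnatr_eq0.
have cancel x y : 2 * x%:~R / w%:R = 2 * y%:~R / w%:R :> R -> x = y.
  by move/(mulIf (invr_neq0 wR_neq0))/(mulfI two_neq0)/intr_inj.
by case=> [[? ?] ?] [[? ?] ?] [/cancel -> /cancel -> /cancel ->].
Qed.

Lemma embed_inLambdaZ A B C :
  embed (w%:Z * A, p%:Z * A + w%:Z * B, p%:Z * A + w%:Z * C) =
  (A%:~R * 2, A%:~R * P + B%:~R * 2, A%:~R * P + C%:~R * 2).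
Proof.
by rewrite /embed; congr (_, _, _) => /=; rewrite ?intrD !intrM ?natrM; field.
Qed.

Lemma inLambda_embed z : inLambda P (embed z) <-> inLambdaZ p w z.
Proof.
split=> [[A [B [C e]]] | [A [B [C ->]]]]; exists A, B, C; last exact: embed_inLambdaZ.
by apply: embed_inj; rewrite embed_inLambdaZ.
Qed.

Lemma Xi_int m n : Xi P (m%:~R, n%:~R) = embed (XiZ p w m n).
Proof.
by rewrite /Xi /embed; congr (_, _, _) => /=; rewrite ?intrD !intrM ?natrM; field.
Qed.

Lemma Xi_half_embed z :
  Xi P (2^-1, 2^-1) + embed z =
  ((2 * p%:Z + w%:Z + 2 * z.1.1)%:~R / w%:R, (2 * (p%:Z + z.1.2))%:~R / w%:R,
   (2 * (2 * p%:Z + z.2))%:~R / w%:R).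
Proof.
by rewrite /Xi /embed; congr (_, _, _) => /=; rewrite ?intrD !intrM ?natrM; field.
Qed.

Lemma inX_embedP x :
  odd w -> inX w x <-> exists z, x = Xi P (2^-1, 2^-1) + embed z.
Proof.
move=> w_odd; have ew := odd_double_half w; rewrite w_odd in ew.
split=> [[a [b [c ->]]] | [[[z1 z2] z3] ->]].
  exists (a - p%:Z - (w./2)%:Z, b - p%:Z, c - 2 * p%:Z); rewrite Xi_half_embed /=.
  by congr (_ %:~R / _, _ %:~R / _, _ %:~R / _); lia.
exists (p%:Z + (w./2)%:Z + z1), (p%:Z + z2), (2 * p%:Z + z3); rewrite Xi_half_embed /=.
by congr (_ %:~R / _, _ %:~R / _, _ %:~R / _); lia.
Qed.

Lemma Xi_C m n :
  Xi P (m%:~R + 2^-1, n%:~R + 2^-1) = embed (XiZ p w m n) + Xi P (2^-1, 2^-1).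
Proof. by rewrite -Xi_int -XiD. Qed.

Lemma Xi_C_inX c : odd w -> inC c -> inX w (Xi P c).
Proof.
move=> w_odd [m [n ->]]; apply/inX_embedP => //.
by exists (XiZ p w m n); rewrite Xi_C addrC.
Qed.

Lemma inL_Xi_inLambdaP c c' : coprimez (2 * p%:Z) w -> inC c -> inC c' ->
  inL w (sub2 c c') <-> inLambda P (sub3 (Xi P c) (Xi P c')).
Proof.
move=> cop [m [n ->]] [m' [n' ->]]; rewrite sub2E sub3E -XiB.
have -> : (m%:~R + 2^-1, n%:~R + 2^-1) - (m'%:~R + 2^-1, n'%:~R + 2^-1) =
    ((m - m')%:~R, (n - n')%:~R) :> R * R.
  by rewrite !intrB; congr (_, _) => /=; ring.
by rewrite Xi_int inLambda_embed XiZ_kernelP // inL_intP.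
Qed.

Lemma Xi_C_surjective x : coprimez (2 * p%:Z) w -> odd w -> inX w x ->
  exists c, inC c /\ inLambda P (sub3 (Xi P c) x).
Proof.
move=> cop w_odd /(inX_embedP x w_odd) [z ->].
have [m [n Lmn]] := XiZ_surjective cop z.
exists (m%:~R + 2^-1, n%:~R + 2^-1); split; first by exists m, n.
by rewrite sub3E Xi_C addrKA -embedB inLambda_embed.
Qed.

End Embedding.

Theorem lemma3p1 (R : realFieldType) (p q : nat) :
  even_rational_param p q ->
  let w := omega p q in
  let P : R := Ppar R p q in
  (* Xi maps C into X + Lambda_P, i.e. into X / Lambda_P *)
  (forall c, inC c -> exists x, inX w x /\ inLambda P (sub3 (Xi P c) x)) /\
  (* well defined on C / L *)
  (forall c c', inC c -> inC c' -> inL w (sub2 c c') ->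
     inLambda P (sub3 (Xi P c) (Xi P c'))) /\
  (* injective on C / L *)
  (forall c c', inC c -> inC c' -> inLambda P (sub3 (Xi P c) (Xi P c')) ->
     inL w (sub2 c c')) /\
  (* surjective onto X / Lambda_P *)
  (forall x, inX w x -> exists c, inC c /\ inLambda P (sub3 (Xi P c) x)).
Proof.
move=> pq w P.
have w_odd : odd w := odd_omega pq.
have w_gt0 := odd_gt0 w_odd.
have cop := coprimez_2p_omega pq.
split=> [c Cc | ].
  by exists (Xi P c); split; [exact: Xi_C_inX | exact: inLambda_subrr].
split=> [c c' Cc Cc' | ]; first exact: (inL_Xi_inLambdaP w_gt0 cop Cc Cc').1.
split=> [c c' Cc Cc' | x]; first exact: (inL_Xi_inLambdaP w_gt0 cop Cc Cc').2.
exact: Xi_C_surjective.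
Qed.
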